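(* Let $\gamma_k>0$, $k\in\mathcal{N}$, let $y(t)$ solve $\dot y_k=\gamma_kv_k(Q(y))$, and let $x(t)=Q(y(t))$. Assume each player's penalty function is decomposable, $h_k(x_k)=\sum_{\beta\in\mathcal{A}_k}\theta_k(x_{k\beta})$. If $\alpha,\beta\in\mathcal{A}_k$ with $\alpha\prec\beta$ (i.e. $v_{k\alpha}(x)<v_{k\beta}(x)$ for all $x\in\mathcal{X}$), then for all $t\ge0$ $$x_{k\alpha}(t)\le\phi_k(c_k-\gamma_k\delta_kt),$$ where $c_k$ is a constant depending only on the initial conditions, $\delta_k=\min\{v_{k\beta}(x)-v_{k\alpha}(x):x\in\mathcal{X}\}$, and $\phi_k(z)=0$ if $z\le\theta_k'(0^+)$, $\phi_k(z)=1$ if $z\ge\theta_k'(1^-)$, and $\phi_k(z)=(\theta_k')^{-1}(z)$ otherwise. In particular, if $\theta_k'(0)$ is finite, dominated strategies become extinct in finite time.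
   Context: Setting: finite game with players $\mathcal{N}$, action sets $\mathcal{A}_k$, mixed strategies $\mathcal{X}_k=\Delta(\mathcal{A}_k)$, $\mathcal{X}=\prod_k\mathcal{X}_k$, payoff vectors $v_k(x)=(u_k(\alpha;x_{-k}))_{\alpha\in\mathcal{A}_k}$ with $u_k$ multilinear expected payoffs. The kernel $\theta_k:[0,1]\to\mathbb{R}$ is continuous, strongly convex and smooth on $(0,1]$; then $h_k$ is a penalty function (continuous, smooth on relative interiors of faces, strongly convex) on $\mathcal{X}_k$ with choice map $Q_k(y_k)=\arg\max_{x_k\in\mathcal{X}_k}\{\langle y_k,x_k\rangle-h_k(x_k)\}$; $Q=(Q_k)_k$. $\theta_k'(0^+)$ and $\theta_k'(1^-)$ denote one-sided limits of $\theta_k'$ (possibly $-\infty$ at $0$). *)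

From HB Require Import structures.
From mathcomp Require Import all_boot all_order all_algebra.
From mathcomp Require Import all_classical all_reals all_analysis.
Set Implicit Arguments. Unset Strict Implicit. Unset Printing Implicit Defensive.
Import Order.TTheory GRing.Theory Num.Theory.
Import numFieldNormedType.Exports.
Local Open Scope classical_set_scope.
Local Open Scope ring_scope.

Section Game.
Variables (R : realType) (I : finType) (A : I -> finType).

Definition pure_profile := {dffun forall k : I, A k}.

Definition mixed := forall k : I, A k -> R.

Definition in_simplex (k : I) (xk : A k -> R) : Prop :=
  (forall a, 0 <= xk a) /\ \sum_(a : A k) xk a = 1.

Definition in_X (x : mixed) : Prop := forall k, in_simplex (x k).

(* v_{k alpha}(x) = u_k(alpha; x_{-k}), multilinear extension of the pure payoffs u *)
Definition payoff_vec (u : I -> pure_profile -> R) (k : I) (alpha : A k) (x : mixed) : R :=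
  \sum_(a : pure_profile | a k == alpha) u k a * \prod_(j | j != k) x j (a j).

Definition decomp_penalty (k : I) (theta : R -> R) (xk : A k -> R) : R :=
  \sum_(b : A k) theta (xk b).

(* xk is Q_k(yk) : a maximizer of <yk,xk> - h_k(xk) over the simplex *)
Definition is_choice (k : I) (theta : R -> R) (yk xk : A k -> R) : Prop :=
  in_simplex xk /\
  forall xk' : A k -> R, in_simplex xk' ->
    \sum_(a : A k) yk a * xk' a - decomp_penalty theta xk'
      <= \sum_(a : A k) yk a * xk a - decomp_penalty theta xk.

End Game.

Section Kernel.
Variable R : realType.

Definition strongly_convex01 (theta : R -> R) : Prop :=
  exists K : R, 0 < K /\
    forall a b l : R, 0 <= a <= 1 -> 0 <= b <= 1 -> 0 <= l <= 1 ->
      theta (l * a + (1 - l) * b)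
        <= l * theta a + (1 - l) * theta b - K / 2 * l * (1 - l) * (a - b) ^+ 2.

Definition penalty_kernel (theta : R -> R) : Prop :=
  [/\ {within `[0, 1], continuous theta},
      strongly_convex01 theta,
      (forall z : R, 0 < z < 1 -> derivable theta z 1),
      (forall z : R, 0 < z < 1 -> {for z, continuous ((derive1 theta))}) &
      cvg ((derive1 theta) z @[z --> 1^'-])].

Definition dtheta0 (theta : R -> R) : \bar R :=
  lim (((derive1 theta) z)%:E @[z --> 0^'+]).

Definition dtheta1 (theta : R -> R) : R := lim ((derive1 theta) z @[z --> 1^'-]).

Definition phi_ext (theta : R -> R) (z : R) : R :=
  if (z%:E <= dtheta0 theta)%E then 0
  else if dtheta1 theta <= z then 1
  else xget 0 [set w : R | 0 < w < 1 /\ (derive1 theta) w = z].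

End Kernel.

From HB Require Import structures.
From mathcomp Require Import all_boot all_order all_algebra.
From mathcomp Require Import all_classical all_reals all_analysis.
From mathcomp Require Import ring lra.
Set Implicit Arguments. Unset Strict Implicit. Unset Printing Implicit Defensive.
Import Order.TTheory GRing.Theory Num.Theory.
Import numFieldNormedType.Exports.
Local Open Scope classical_set_scope.
Local Open Scope ring_scope.

(* Along the dynamics, y_alpha - y_beta decreases at rate at least gamma delta
   (mean value theorem).  At x = Q(y), shifting mass from alpha to beta is not
   profitable; by convexity of theta this gives
   theta'(s) <= y_alpha - y_beta + theta'(1^-) for every s < x_alpha, so x_alpha
   lies below the point where theta' reaches that value, i.e.
   x_alpha <= phi(c - gamma delta t).  When theta'(0^+) is finite, the argument
   of phi eventually drops below it, where phi vanishes. *)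

Section Convexity.
Variable R : realType.
Implicit Types th : R -> R.

Definition convex01 th := forall a b l : R, 0 <= a <= 1 -> 0 <= b <= 1 -> 0 <= l <= 1 ->
  th (l * a + (1 - l) * b) <= l * th a + (1 - l) * th b.

Lemma strongly_convex01_convex01 th : strongly_convex01 th -> convex01 th.
Proof.
move=> [K [K0 HK]] a b l a01 b01 /andP[l0 l1]; apply: le_trans (HK _ _ _ a01 b01 _) _.
  by rewrite l0 l1.
rewrite lerBlDr lerDl; apply: mulr_ge0; last exact: sqr_ge0.
by rewrite !mulr_ge0 ?subr_ge0 // ltW.
Qed.

Lemma convex01_tangent th a b : convex01 th -> 0 < a < 1 -> 0 <= b <= 1 ->
  derivable th a 1 -> th a + derive1 th a * (b - a) <= th b.
Proof.
move=> cvx /andP[a0 a1] b01 /derivable1_diffP dth.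
have Dba : 'D_(b - a) th a = derive1 th a * (b - a).
  by rewrite deriveE // diff1E // mulrC.
have quot : (fun h => h^-1 *: ((th \o shift a) (h *: (b - a)) - th a)) @ 0^'+
    --> derive1 th a * (b - a).
  by rewrite -Dba; apply: cvg_dnbhs_at_right; exact: diff_derivable.
suff : derive1 th a * (b - a) <= th b - th a by lra.
rewrite -(cvg_lim _ quot) //; apply: limr_le; first exact: cvgP quot.
near=> h.
have h0 : 0 < h by near: h; exact: nbhs_right_gt.
have h1 : h < 1 by near: h; exact/nbhs_right_lt/ltr01.
have := cvx b a h b01 _ _; rewrite (ltW a0) (ltW a1) (ltW h0) (ltW h1) => /(_ erefl erefl).
have -> : h * b + (1 - h) * a = h *: (b - a) + a by rewrite /GRing.scale /=; ring.
rewrite /= /shift /= => chord.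
rewrite /GRing.scale /= ler_pdivrMl //; lra.
Unshelve. all: by end_near.
Qed.
End Convexity.

Section Kernel.
Variables (R : realType) (th : R -> R).
Hypothesis th_kernel : penalty_kernel th.

Lemma kernel_tangent a b : 0 < a < 1 -> 0 <= b <= 1 ->
  th a + derive1 th a * (b - a) <= th b.
Proof.
case: th_kernel => _ /strongly_convex01_convex01 cvx th_derivable _ _ a01 b01.
by apply: convex01_tangent => //; exact: th_derivable.
Qed.

Lemma derive1_nondecreasing a b : 0 < a -> a <= b -> b < 1 -> derive1 th a <= derive1 th b.
Proof.
move=> a0 ab b1; have a1 := le_lt_trans ab b1; have b0 := lt_le_trans a0 ab.
have tab : th a + derive1 th a * (b - a) <= th b.
  by apply: kernel_tangent; rewrite ?a0 ?a1 ?(ltW b0) ?(ltW b1).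
have tba : th b + derive1 th b * (a - b) <= th a.
  by apply: kernel_tangent; rewrite ?b0 ?b1 ?(ltW a0) ?(ltW a1).
move: ab; rewrite le_eqVlt => /orP[/eqP-> //|ab]; nra.
Qed.

Lemma derive1_le_dtheta1 s : 0 < s < 1 -> derive1 th s <= dtheta1 th.
Proof.
case: th_kernel => _ _ _ _ cvg1 /andP[s0 s1]; apply: limr_ge => //.
near=> r; apply: derive1_nondecreasing => //.
by apply: ltW; near: r; exact: nbhs_left_gt.
Unshelve. all: by end_near.
Qed.

Lemma exists_derive1_gt z : z < dtheta1 th -> exists2 b, 0 < b < 1 & z < derive1 th b.
Proof.
case: th_kernel => _ _ _ _ cvg1 zlt.
apply: contrapT => no_point; move: zlt; apply/negP; rewrite -leNgt.
apply: limr_le => //; near=> r; rewrite leNgt; apply/negP => zr.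
apply: no_point; exists r => //; apply/andP; split.
  by near: r; exact: nbhs_left_gt.
by near: r; exact: nbhs_left_lt.
Unshelve. all: by end_near.
Qed.

Lemma cvg_derive1_at_right0 : cvg ((derive1 th z)%:E @[z --> 0^'+]).
Proof.
apply: nondecreasing_at_right_is_cvge; near=> w => p q.
rewrite !in_itv /= => /andP[p0 pw] /andP[q0 qw] pq.
rewrite lee_fin; apply: derive1_nondecreasing => //.
by apply: lt_trans qw _; near: w; exact/nbhs_right_lt/ltr01.
Unshelve. all: by end_near.
Qed.

Lemma dtheta0_le_derive1 s : 0 < s < 1 -> (dtheta0 th <= (derive1 th s)%:E)%E.
Proof.
move=> /andP[s0 s1]; apply: lime_le; first exact: cvg_derive1_at_right0.
near=> r; rewrite lee_fin; apply: derive1_nondecreasing => //.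
by apply: ltW; near: r; exact: nbhs_right_lt.
Unshelve. all: by end_near.
Qed.

Lemma exists_derive1_lt z : (dtheta0 th < z%:E)%E -> exists2 a, 0 < a < 1 & derive1 th a < z.
Proof.
move=> zgt; apply: contrapT => no_point; move: zgt; apply/negP; rewrite -leNgt.
apply: lime_ge; first exact: cvg_derive1_at_right0.
near=> r; rewrite lee_fin leNgt; apply/negP => rz.
apply: no_point; exists r => //; apply/andP; split.
  by near: r; exact: nbhs_right_gt.
by near: r; exact/nbhs_right_lt/ltr01.
Unshelve. all: by end_near.
Qed.

(* The hypothesis is strict: theta' may equal z on a whole interval, of which
   [xget] picks an arbitrary point. *)
Lemma phi_ext_ge xa z : 0 < xa <= 1 -> (forall s, 0 < s < xa -> derive1 th s < z) ->
  xa <= phi_ext th z.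
Proof.
move=> /andP[xa0 xa1] below; rewrite /phi_ext.
case: ifPn => [z_le0|]; last rewrite -ltNge => z_gt0.
  have /(le_trans z_le0) : (dtheta0 th <= (derive1 th (xa / 2))%:E)%E.
    by apply: dtheta0_le_derive1; apply/andP; split; lra.
  by rewrite lee_fin leNgt below //; apply/andP; split; lra.
case: ifPn => //; rewrite -ltNge => z_lt1.
have [a /andP[a0 a1] Da] := exists_derive1_lt z_gt0.
have [b /andP[b0 b1] Db] := exists_derive1_gt z_lt1.
have ab : a <= b.
  rewrite leNgt; apply/negP => ba.
  by have := derive1_nondecreasing b0 (ltW ba) a1; rewrite leNgt (lt_trans Da Db).
have [c cab Dc] : exists2 c, c \in `[a, b] & derive1 th c = z.
  apply: IVT => //; last by rewrite ge_min (ltW Da) le_max (ltW Db) orbT.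
  apply: continuous_in_subspaceT => w /set_mem; rewrite /= in_itv /= => /andP[aw wb].
  by case: th_kernel => _ _ _ + _; apply; rewrite (lt_le_trans a0 aw) (le_lt_trans wb b1).
move: cab; rewrite in_itv /= => /andP[ac cb].
case: xgetP => [w _ [/andP[w0 w1] Dw]|none]; last first.
  by case: (none c); rewrite /= (lt_le_trans a0 ac) (le_lt_trans cb b1).
rewrite leNgt; apply/negP => wxa.
have [wm mxa] : w < (w + xa) / 2 /\ (w + xa) / 2 < xa by split; lra.
have := derive1_nondecreasing w0 (ltW wm) (lt_le_trans mxa xa1).
by rewrite Dw leNgt below // (lt_trans w0 wm) mxa.
Qed.

End Kernel.

Lemma phi_ext_ge0 (R : realType) (th : R -> R) z : 0 <= phi_ext th z.
Proof.
rewrite /phi_ext; case: ifP => // _; case: ifP => // _.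
by case: xgetP => // w _ [/andP[/ltW]].
Qed.

Lemma bigD1_pair (R : realType) (T : finType) (al be : T) (F : T -> R) : al != be ->
  \sum_a F a = F al + F be + \sum_(a | (a != al) && (a != be)) F a.
Proof.
by move=> ab; rewrite (bigD1 al) //= (bigD1 be) 1?eq_sym //= addrA.
Qed.

Section Choice.
Variables (R : realType) (I : finType) (A : I -> finType) (k : I).
Implicit Types (xk yk : A k -> R) (al be : A k).

Lemma in_simplex_pair_le1 xk al be : in_simplex xk -> al != be -> xk al + xk be <= 1.
Proof.
move=> [xk0 <-] ab; rewrite (bigD1_pair _ ab) lerDl.
by apply: sumr_ge0 => a _.
Qed.

Lemma is_choice_transfer th yk xk al be e : is_choice th yk xk -> al != be ->
  0 <= e <= xk al ->
  yk al * (xk al - e) - th (xk al - e) + (yk be * (xk be + e) - th (xk be + e))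
    <= yk al * xk al - th (xk al) + (yk be * xk be - th (xk be)).
Proof.
move=> [[xk0 xk1] opt] ab /andP[e0 exk].
pose x' a := if a == al then xk al - e else if a == be then xk be + e else xk a.
have x'al : x' al = xk al - e by rewrite /x' eqxx.
have x'be : x' be = xk be + e by rewrite /x' eq_sym (negbTE ab) eqxx.
have x'E a : (a != al) && (a != be) -> x' a = xk a.
  by case/andP=> /negbTE a1 /negbTE a2; rewrite /x' a1 a2.
have obj xk' : \sum_a yk a * xk' a - decomp_penalty th xk' =
    yk al * xk' al - th (xk' al) + (yk be * xk' be - th (xk' be))
    + \sum_(a | (a != al) && (a != be)) (yk a * xk' a - th (xk' a)).
  by rewrite /decomp_penalty -sumrB (bigD1_pair _ ab) addrA.
have x'_simplex : in_simplex x'.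
  split=> [a|]; last first.
    by rewrite (bigD1_pair _ ab) (eq_bigr _ x'E) x'al x'be -xk1 (bigD1_pair _ ab); lra.
  rewrite /x'; case: ifP => _; first by rewrite subr_ge0.
  by case: ifP => _ //; rewrite addr_ge0.
have := opt x' x'_simplex; rewrite !obj x'al x'be.
by under eq_bigr => a /x'E -> do []; rewrite lerD2r.
Qed.

Variable th : R -> R.
Hypothesis th_kernel : penalty_kernel th.

Lemma is_choice_derive1_le yk xk al be s : is_choice th yk xk -> al != be ->
  0 < s < xk al -> derive1 th s <= yk al - yk be + dtheta1 th.
Proof.
move=> xk_choice ab /andP[s0 sxa].
have [[xk0 _] _] := xk_choice; have pair1 := in_simplex_pair_le1 xk_choice.1 ab.
have xbe0 := xk0 be.
set p := xk be + (xk al - s).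
have p01 : 0 < p < 1 by rewrite /p; apply/andP; split; lra.
have trans : yk al * s - th s + (yk be * p - th p)
    <= yk al * xk al - th (xk al) + (yk be * xk be - th (xk be)).
  have := @is_choice_transfer th yk xk al be (xk al - s) xk_choice ab.
  rewrite (_ : xk al - (xk al - s) = s); last by ring.
  by apply; apply/andP; split; lra.
have tan_s : th s + derive1 th s * (xk al - s) <= th (xk al).
  by apply: kernel_tangent => //; apply/andP; split; lra.
have tan_p : th p + derive1 th p * (xk be - p) <= th (xk be).
  by apply: kernel_tangent => //; apply/andP; split; lra.
have : (xk al - s) * derive1 th s <= (xk al - s) * (yk al - yk be + derive1 th p).
  by rewrite /p in trans tan_p *; lra.
rewrite ler_pM2l ?subr_gt0 // => le_p.
by apply: (le_trans le_p); rewrite lerD2l; exact: derive1_le_dtheta1.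
Qed.

Lemma is_choice_le_phi_ext yk xk al be z : is_choice th yk xk -> al != be ->
  yk al - yk be + dtheta1 th < z -> xk al <= phi_ext th z.
Proof.
move=> xk_choice ab ltz; have [[xk0 _] _] := xk_choice.
have [->|xa0] := eqVneq (xk al) 0; first exact: phi_ext_ge0.
apply: phi_ext_ge => //.
  rewrite lt_def xa0 xk0 /=; apply: le_trans (in_simplex_pair_le1 xk_choice.1 ab).
  by rewrite lerDl.
by move=> s s_range; apply: le_lt_trans ltz; exact: is_choice_derive1_le s_range.
Qed.

End Choice.

Lemma le_affine_of_derive_le (R : realType) (f df : R -> R) (m : R) :
  {within `[0, +oo[, continuous f} -> (forall t : R, 0 < t -> is_derive t 1 f (df t)) ->
  (forall t : R, 0 < t -> df t <= - m) -> forall t : R, 0 <= t -> f t <= f 0 - m * t.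
Proof.
move=> fcont fder dfle t; rewrite le_eqVlt => /orP[/eqP<-|t0].
  by rewrite mulr0 subr0.
have [c /andP[c0 _]] : exists2 c, c \in `]0, t[ & f t - f 0 = df c * (t - 0).
  apply: MVT => // [c /andP[c0 _]|]; first exact: fder.
  by apply: continuous_subspaceW fcont => r /=; rewrite !in_itv /= => /andP[-> _].
rewrite subr0 => mvt.
have : df c * t <= - m * t by rewrite ler_pM2r // dfle.
lra.
Qed.

Theorem proposition4p2 (R : realType) (I : finType) (A : I -> finType)
  (u : I -> pure_profile A -> R)
  (theta : forall k : I, R -> R)
  (gamma : I -> R)
  (y : forall k : I, A k -> R -> R)
  (x : R -> mixed R A) :
  (forall k, penalty_kernel (theta k)) ->
  (forall k, 0 < gamma k) ->
  (forall k (a : A k), {within `[0, +oo[, continuous (y k a)}) ->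
  (forall k (a : A k) (t : R), 0 < t ->
      is_derive t 1 (y k a) (gamma k * payoff_vec u a (x t))) ->
  (forall t : R, 0 <= t -> forall k,
      is_choice (theta k) (fun a => y k a t) (x t k)) ->
  forall (k : I) (alpha beta : A k),
    (forall z : mixed R A, in_X z -> payoff_vec u alpha z < payoff_vec u beta z) ->
  forall delta : R,
    (exists2 z0 : mixed R A, in_X z0 &
        delta = payoff_vec u beta z0 - payoff_vec u alpha z0) ->
    (forall z : mixed R A, in_X z ->
        delta <= payoff_vec u beta z - payoff_vec u alpha z) ->
  (exists c : R, forall t : R, 0 <= t ->
      x t k alpha <= phi_ext (theta k) (c - gamma k * delta * t)) /\
  (dtheta0 (theta k) \is a fin_num ->
      exists T : R, forall t : R, T <= t -> x t k alpha = 0).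
Proof.
move=> kernel gamma_gt0 y_cont y_der x_choice k al be dominated delta.
move=> [z0 z0X delta_z0] delta_min.
have ab : al != be by apply: contraTneq (dominated z0 z0X) => ->; rewrite ltxx.
have delta_gt0 : 0 < delta by rewrite delta_z0 subr_gt0 dominated.
have gd_gt0 : 0 < gamma k * delta by rewrite mulr_gt0.
pose f t := y k al t - y k be t.
have decay t : 0 <= t -> f t <= f 0 - gamma k * delta * t.
  apply: (le_affine_of_derive_le (df := fun t =>
    gamma k * payoff_vec u al (x t) - gamma k * payoff_vec u be (x t))).
  - by move=> r; apply: continuousB; [exact: y_cont|exact: y_cont].
  - by move=> r r0; apply: is_deriveB; exact: y_der.
  move=> r r0; rewrite -mulrBr -mulrN ler_pM2l // lerNr opprB.
  by apply: delta_min => j; exact: (x_choice r (ltW r0) j).1.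
(* The [+ 1] makes the hypothesis of [is_choice_le_phi_ext] strict. *)
pose c := f 0 + dtheta1 (theta k) + 1.
have bound t : 0 <= t -> x t k al <= phi_ext (theta k) (c - gamma k * delta * t).
  move=> t0; apply: (is_choice_le_phi_ext (kernel k) (x_choice t t0 k) ab).
  by have := decay t t0; rewrite /c /f; lra.
split; first by exists c.
move=> /fineK dtheta0E.
exists (Num.max 0 ((c - fine (dtheta0 (theta k))) / (gamma k * delta))) => t.
rewrite ge_max => /andP[t0 Tt].
apply/eqP; rewrite eq_le (x_choice t t0 k).1.1 andbT.
apply: le_trans (bound t t0) _; rewrite /phi_ext -dtheta0E lee_fin ifT //.
by move: Tt; rewrite ler_pdivrMr // mulrC; lra.
Qed.
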